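(* Let \[ g=\begin{pmatrix}A&C\\0&B\end{pmatrix}\in\mathrm{GL}_{n+m}(L), \] where $A\in\mathrm{GL}_n(L)$ and $B\in\mathrm{GL}_m(L)$ are monomial matrices in the sense that each row of $A$ and each column of $B$ contains exactly one nonzero entry. For $1\le i\le n$ let $\alpha_i$ be the valuation of the unique nonzero entry in row $i$ of $A$, and for $1\le j\le m$ let $\beta_j$ be the valuation of the unique nonzero entry in column $j$ of $B$. Order the combined list $\{\alpha_1,\dots,\alpha_n,\beta_1,\dots,\beta_m\}$ as $\gamma_1\le\gamma_2\le\cdots\le\gamma_{n+m}$. Then \[ g\in K\,\mathrm{diag}(t^{\gamma_1},\dots,t^{\gamma_{n+m}})\,K \] if and only if every entry $c_{ij}$ of the block $C$ satisfies $v(c_{ij})\ge\min\{\alpha_i,\beta_j\}$.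
   Context: $F$ is a non-Archimedean local field with uniformizer $t$; $L$ is the completion of the maximal unramified extension of $F$, with ring of integers $\mathcal O_L$ and normalized valuation $v$ ($v(t)=1$). $K=\mathrm{GL}_{n+m}(\mathcal O_L)$. *)

From HB Require Import structures.
From mathcomp Require Import all_boot all_order all_algebra.
Set Implicit Arguments. Unset Strict Implicit. Unset Printing Implicit Defensive.
Import Order.TTheory GRing.Theory Num.Theory.
Local Open Scope ring_scope.

(* A normalized discrete valuation v on the field L (values on nonzero
   elements; v 0 is conventionally +oo and the value stored for 0 is
   irrelevant), with uniformizer t (v t = 1). *)
Definition discrete_valuation (L : fieldType) (v : L -> int) (t : L) : Prop :=
  [/\ forall x y : L, x != 0 -> y != 0 -> v (x * y) = v x + v y,
      forall x y : L, x != 0 -> y != 0 -> x + y != 0 ->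
        Num.min (v x) (v y) <= v (x + y),
      t != 0 & v t = 1].

Definition vge (L : fieldType) (v : L -> int) (x : L) (k : int) : Prop :=
  x = 0 \/ k <= v x.

Definition integral (L : fieldType) (v : L -> int) (x : L) : Prop := vge v x 0.

(* K = GL_N(O_L): invertible matrices with entries in O_L whose inverse
   also has entries in O_L *)
Definition in_K (L : fieldType) (v : L -> int) (N : nat) (M : 'M[L]_N) : Prop :=
  [/\ M \in unitmx, forall i j, integral v (M i j)
    & forall i j, integral v (invmx M i j)].

Definition in_KdK (L : fieldType) (v : L -> int) (N : nat)
    (g : 'M[L]_N) (d : 'rV[L]_N) : Prop :=
  exists k1 k2 : 'M[L]_N, [/\ in_K v k1, in_K v k2 & g = k1 *m diag_mx d *m k2].

Definition row_monomial (L : fieldType) (n : nat) (A : 'M[L]_n) : Prop :=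
  forall i, exists! j, A i j != 0.

Definition col_monomial (L : fieldType) (m : nat) (B : 'M[L]_m) : Prop :=
  forall j, exists! i, B i j != 0.

From HB Require Import structures.
From mathcomp Require Import all_boot all_order all_algebra all_fingroup zify.
Import Order.TTheory GRing.Theory Num.Theory.
Local Open Scope ring_scope.
Set Implicit Arguments. Unset Strict Implicit.

(* If g = k1 diag(t^gamma) k2 with k1, k2 in K then, by Cauchy-Binet, every
   k x k minor of g has valuation at least the sum of the k smallest gamma's.
   Suppose some c = C_ij has v(c) < alpha_i and v(c) < beta_j.  The rows of A
   with alpha <= v(c), row i, and the rows of B whose column has beta <= v(c),
   paired with their support columns and column j, cut out a triangular minor
   of g whose valuation is v(c) plus the sum of the alpha's and beta's that are
   <= v(c); it has one more row than there are gamma's <= v(c), so that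
   valuation is too small.
   Conversely, if v(C_ij) >= min(alpha_i, beta_j), split C = C1 + C2 according
   to which of alpha_i, beta_j is smaller: A^-1 C1 and C2 B^-1 are integral, so
   unipotent elements of K reduce g to diag(A, B).  A monomial matrix with row
   valuations d is diag(t^d) times a monomial matrix with unit entries, which
   lies in K, and a permutation matrix in K sorts d into gamma. *)

Lemma invmx_mulmx1 (R : comUnitRingType) N (P Q : 'M[R]_N) :
  P *m Q = 1%:M -> invmx P = Q.
Proof.
move=> PQ; have [uP _] := mulmx1_unit PQ.
by rewrite -[invmx P]mulmx1 -PQ mulmxA mulVmx // mul1mx.
Qed.

Section Monomial.
Variables (R : fieldType) (N : nat) (M : 'M[R]_N) (s : 'I_N -> 'I_N).
Hypotheses (s_inj : injective s) (M_supp : forall i k, (M i k != 0) = (k == s i)).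

Lemma mulmx_monomial_inv :
  M *m \matrix_(k, i) (if k == s i then (M i k)^-1 else 0) = 1%:M.
Proof.
apply/matrixP => i i'; rewrite !mxE (bigD1 (s i)) //= big1 => [|k ki]; last first.
  have /eqP -> : M i k == 0 by rewrite -[_ == 0]negbK M_supp ki.
  by rewrite mul0r.
rewrite mxE (inj_eq s_inj) eq_sym addr0; case: eqP => [->|_]; last by rewrite mulr0.
by rewrite mulfV ?M_supp.
Qed.

Lemma monomial_unitmx : M \in unitmx.
Proof. exact: (mulmx1_unit mulmx_monomial_inv).1. Qed.

Lemma invmx_monomial :
  invmx M = \matrix_(k, i) (if k == s i then (M i k)^-1 else 0).
Proof. exact: invmx_mulmx1 mulmx_monomial_inv. Qed.

End Monomial.

Lemma row_monomial_support (R : fieldType) N (M : 'M[R]_N) :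
  M \in unitmx -> row_monomial M ->
  exists2 s : 'I_N -> 'I_N, injective s & forall i k, (M i k != 0) = (k == s i).
Proof.
move=> uM /fin_all_exists [s hs].
have supp i k : (M i k != 0) = (k == s i).
  by case: (hs i) => nz uq; apply/idP/eqP => [/uq|->].
exists s => //.
have col_nz k : exists i, M i k != 0.
  apply/existsP; apply: contraTT uM => /existsPn col0.
  rewrite unitmxE unitfE negbK (expand_det_col _ k) big1 // => i _.
  by rewrite (eqP (negbNE (col0 i))) mul0r.
have [r hr] := fin_all_exists col_nz.
have sr : cancel r s by move=> k; apply/esym/eqP; rewrite -supp.
have [r' _ r'r] := injF_bij (can_inj sr).
have sr' : s =1 r' by move=> i; rewrite -{1}(r'r i) sr.
by move=> i1 i2; rewrite !sr' => /(can_inj r'r).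
Qed.

Lemma row_monomial_tr (R : fieldType) N (M : 'M[R]_N) :
  col_monomial M -> row_monomial M^T.
Proof.
move=> cM k; have [i [nz uq]] := cM k.
by exists i; split=> [|i']; rewrite mxE // => /uq.
Qed.

Lemma col_monomial_support (R : fieldType) N (M : 'M[R]_N) :
  M \in unitmx -> col_monomial M ->
  exists2 r : 'I_N -> 'I_N, injective r & forall i k, (M i k != 0) = (i == r k).
Proof.
move=> uM /row_monomial_tr; rewrite -unitmx_tr in uM.
case/(row_monomial_support uM) => r r_inj supp.
by exists r => // i k; rewrite -supp mxE.
Qed.

Lemma block_mx_unipotent (R : comUnitRingType) n m (A : 'M[R]_n) (B : 'M[R]_m)
    (C1 C2 : 'M[R]_(n, m)) :
  A \in unitmx -> B \in unitmx ->
  block_mx A (C1 + C2) 0 B =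
  block_mx 1%:M (C2 *m invmx B) 0 1%:M *m block_mx A 0 0 B *m
  block_mx 1%:M (invmx A *m C1) 0 1%:M.
Proof.
move=> uA uB; rewrite !mulmx_block !mulmx0 !mul0mx !mul1mx !mulmx1 !addr0 !add0r.
by rewrite mul0mx add0r mulmxA mulmxV // mul1mx -mulmxA mulVmx // mulmx1.
Qed.

Lemma det_mulmx_ffun (R : comPzRingType) k N (X : 'M[R]_(k, N)) (Y : 'M[R]_(N, k)) :
  \det (X *m Y) =
  \sum_(f : {ffun 'I_k -> 'I_N}) (\prod_i X i (f i)) * \det (\matrix_(i, j) Y (f i) j).
Proof.
rewrite /determinant.
transitivity (\sum_(s : 'S_k) \sum_(f : {ffun 'I_k -> 'I_N})
   (-1) ^+ s * \prod_i (X i (f i) * Y (f i) (s i))).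
  apply: eq_bigr => s _; rewrite -big_distrr /=; congr (_ * _).
  rewrite -(bigA_distr_bigA (fun i l => X i l * Y l (s i))) /=.
  by apply: eq_bigr => i _; rewrite mxE.
rewrite exchange_big /=; apply: eq_bigr => f _.
rewrite big_distrr /=; apply: eq_bigr => s _.
rewrite big_split /= mulrCA; congr (_ * (_ * _)).
by apply: eq_bigr => i _; rewrite mxE.
Qed.

Lemma sum_sublevel_lt N (d : 'I_N -> int) (c : int) (S : {set 'I_N}) :
  #|S| = #|[set x | d x <= c]|.+1 ->
  \sum_(x in [set x | d x <= c]) d x + c < \sum_(x in S) d x.
Proof.
set Q := [set x | d x <= c] => cardS.
rewrite (big_setID (A := Q) S) (big_setID (A := S) Q) /= setIC.
have inQ x : (x \in Q) = (d x <= c) by rewrite inE.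
have le_c : \sum_(x in Q :\: S) d x <= #|Q :\: S|%:R * c.
  rewrite mulr_natl -sumr_const; apply: ler_sum => x.
  by rewrite inE inQ => /andP[_ ->].
have gt_c : #|S :\: Q|%:R * (c + 1) <= \sum_(x in S :\: Q) d x.
  rewrite mulr_natl -sumr_const; apply: ler_sum => x.
  by rewrite inE inQ -ltNge lezD1 => /andP[].
have cardSQ : #|S :\: Q| = (#|Q :\: S|).+1.
  apply/(@addnI #|S :&: Q|); rewrite cardsID.
  by rewrite cardS -(cardsID S Q) setIC addnS.
rewrite cardSQ -addn1 natrD mulrDl mul1r mulrDr mulr1 in gt_c.
have := ler0n int #|Q :\: S|; move: le_c gt_c; move: (_%:R : int) => z.
(* [lia] needs [z * c] and the partial sums as opaque atoms. *)
move: (z * c) (\sum_(x in _) _) (\sum_(x in _) _) (\sum_(x in _) _) => w a b s0; lia.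
Qed.

Definition sorted_valuations n m (alpha : 'I_n -> int) (beta : 'I_m -> int) :=
  sort <=%O ([seq alpha i | i <- enum 'I_n] ++ [seq beta j | j <- enum 'I_m]).

Lemma size_sorted_valuations n m (alpha : 'I_n -> int) (beta : 'I_m -> int) :
  size (sorted_valuations alpha beta) = (n + m)%N.
Proof. by rewrite size_sort size_cat !size_map -!enumT !size_enum_ord. Qed.

Lemma sum_sorted_valuations n m (alpha : 'I_n -> int) (beta : 'I_m -> int)
    (c : int) (F : int -> int) :
  \sum_(x in [set x : 'I_(n + m) | nth 0 (sorted_valuations alpha beta) x <= c])
     F (nth 0 (sorted_valuations alpha beta) x) =
  \sum_(i in [set i | alpha i <= c]) F (alpha i) +
  \sum_(j in [set j | beta j <= c]) F (beta j).
Proof.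
have setE (T : finType) (P : pred T) (G : T -> int) :
  \sum_(x in [set x | P x]) G x = \sum_(x | P x) G x.
  by apply: eq_bigl => x; rewrite inE.
rewrite !setE -(big_mkord (fun x => nth 0 _ x <= c) (fun x => F (nth 0 _ x))).
rewrite -{1}(size_sorted_valuations alpha beta) -(big_nth 0 (fun y => y <= c) F).
rewrite (perm_big _ (permEl (perm_sort _ _))) big_cat !big_map /=.
by rewrite -!enumT !big_enum_cond.
Qed.

Lemma row_nth_cat_enum (T : Type) n m (f : int -> T) (alpha : 'I_n -> int)
    (beta : 'I_m -> int) :
  \row_(k < n + m) f (nth 0 ([seq alpha i | i <- enum 'I_n] ++
                              [seq beta j | j <- enum 'I_m]) k) =
  row_mx (\row_i f (alpha i)) (\row_j f (beta j)).
Proof.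
apply/rowP => k; rewrite mxE nth_cat size_map size_enum_ord.
case: (split_ordP k) => [i ->|j ->]; rewrite ?row_mxEl ?row_mxEr mxE /=.
  by rewrite (nth_map i) ?size_enum_ord // nth_ord_enum.
by rewrite addKn (nth_map j) ?size_enum_ord // nth_ord_enum.
Qed.

Lemma sort_nth_perm N (s : seq int) : size s = N ->
  exists p : 'S_N, forall k : 'I_N, nth 0 (sort <=%O s) k = nth 0 s (p k).
Proof.
move=> /eqP sz; have /tuple_permP [p sort_p] : perm_eq (sort <=%O s) (Tuple sz).
  by rewrite perm_sort.
by exists p => k; rewrite sort_p -tnth_nth tnth_mktuple (tnth_nth 0).
Qed.

Section Valuation.
Variables (L : fieldType) (v : L -> int) (t : L).
Hypothesis hv : discrete_valuation v t.

Lemma valuationM x y : x != 0 -> y != 0 -> v (x * y) = v x + v y.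
Proof. by case: hv => vM _ _ _; apply: vM. Qed.

Lemma valuation1 : v 1 = 0.
Proof.
by have := valuationM (oner_neq0 L) (oner_neq0 L); rewrite mulr1 -{1}[v 1]addr0 => /addrI.
Qed.

Lemma valuationV x : x != 0 -> v x^-1 = - v x.
Proof.
by move=> x0; have := valuationM x0 (invr_neq0 x0); rewrite mulfV // valuation1; lia.
Qed.

Lemma valuationN x : x != 0 -> v (- x) = v x.
Proof.
move=> x0; have N1_0 : (-1 : L) != 0 by rewrite oppr_eq0 oner_neq0.
have := valuationM N1_0 N1_0; rewrite mulrNN mulr1 valuation1 => vN1.
by rewrite -mulN1r valuationM // (_ : v (-1) = 0) ?add0r //; lia.
Qed.

Lemma expz_neq0 (z : int) : t ^ z != 0.
Proof. by apply: expfz_neq0; case: hv. Qed.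

Lemma valuation_expz (z : int) : v (t ^ z) = z.
Proof.
have [t0 vt] : t != 0 /\ v t = 1 by case: hv.
have vX k : v (t ^+ k) = k.
  elim: k => [|k IH]; first by rewrite expr0 valuation1.
  by rewrite exprS valuationM ?expf_neq0 // IH vt; lia.
case: z => k; first exact: vX.
by rewrite NegzE -exprnN valuationV ?expf_neq0 // vX.
Qed.

Lemma vge_le x k k' : k' <= k -> vge v x k -> vge v x k'.
Proof. by move=> le_k [->|h]; [left | right; apply: le_trans h]. Qed.

Lemma vgeD x y k : vge v x k -> vge v y k -> vge v (x + y) k.
Proof.
move=> [->|hx]; first by rewrite add0r.
move=> [->|hy]; first by rewrite addr0; right.
have [->|x0] := eqVneq x 0; first by rewrite add0r; right.
have [->|y0] := eqVneq y 0; first by rewrite addr0; right.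
have [->|xy0] := eqVneq (x + y) 0; first by left.
right; case: hv => _ vD _ _; apply: le_trans (vD _ _ x0 y0 xy0).
by rewrite le_min hx hy.
Qed.

Lemma vgeN x k : vge v x k -> vge v (- x) k.
Proof.
have [->|x0] := eqVneq x 0; first by rewrite oppr0; left.
by case=> [x_0|h]; [rewrite x_0 eqxx in x0 | right; rewrite valuationN].
Qed.

Lemma vgeM x y a b : vge v x a -> vge v y b -> vge v (x * y) (a + b).
Proof.
have [->|x0] := eqVneq x 0; first by rewrite mul0r; left.
have [->|y0] := eqVneq y 0; first by rewrite mulr0; left.
case=> [x_0|hx]; first by rewrite x_0 eqxx in x0.
case=> [y_0|hy]; first by rewrite y_0 eqxx in y0.
by right; rewrite valuationM // lerD.
Qed.

Lemma vge_sum (I : Type) (r : seq I) (P : pred I) (F : I -> L) k :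
  (forall i, P i -> vge v (F i) k) -> vge v (\sum_(i <- r | P i) F i) k.
Proof.
move=> hF; apply: (big_ind (fun x => vge v x k)) => //; first by left.
by move=> x y; apply: vgeD.
Qed.

Lemma vge_prod (I : Type) (r : seq I) (P : pred I) (F : I -> L) (a : I -> int) :
  (forall i, P i -> vge v (F i) (a i)) ->
  vge v (\prod_(i <- r | P i) F i) (\sum_(i <- r | P i) a i).
Proof.
move=> hF; apply: (big_ind2 (vge v)) => //; first by right; rewrite valuation1.
by move=> x1 x2 a1 a2; apply: vgeM.
Qed.

Lemma integral_bool (b : bool) : integral v b%:R.
Proof. by case: b; [right; rewrite valuation1 | left]. Qed.

Lemma integral_det k (M : 'M[L]_k) :
  (forall i j, integral v (M i j)) -> integral v (\det M).
Proof.
move=> hM; apply: vge_sum => s _; rewrite -[0]add0r.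
apply: vgeM; first by case: (odd_perm s); [apply: vgeN|]; apply: integral_bool true.
have := @vge_prod _ (index_enum _) predT (fun i => M i (s i)) (fun _ => 0).
by rewrite big1_eq; apply=> i _; apply: hM.
Qed.

Lemma integral_mulmx a b c (X : 'M[L]_(a, b)) (Y : 'M[L]_(b, c)) :
  (forall i j, integral v (X i j)) -> (forall i j, integral v (Y i j)) ->
  forall i j, integral v ((X *m Y) i j).
Proof.
move=> hX hY i j; rewrite mxE; apply: vge_sum => l _.
by rewrite -[0]addr0; apply: vgeM; [apply: hX | apply: hY].
Qed.

Lemma valuation_prod (I : finType) (P : pred I) (F : I -> L) :
  (forall i, P i -> F i != 0) -> v (\prod_(i | P i) F i) = \sum_(i | P i) v (F i).
Proof.
move=> F0.
have [] : \prod_(i | P i) F i != 0 /\ v (\prod_(i | P i) F i) = \sum_(i | P i) v (F i).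
  apply: (big_ind2 (fun x z => x != 0 /\ v x = z)) => [|x1 z1 x2 z2 [x10 <-] [x20 <-]|i Pi].
  - by rewrite oner_neq0 valuation1.
  - by rewrite mulf_neq0 // valuationM.
  - by rewrite F0.
by [].
Qed.

Lemma integral_0mx {a b} i j : integral v ((0 : 'M[L]_(a, b)) i j).
Proof. by rewrite mxE; left. Qed.

Lemma integral_1mx {k} i j : integral v ((1%:M : 'M[L]_k) i j).
Proof. by rewrite mxE; apply: integral_bool. Qed.

Lemma integral_block_mx n m (P : 'M[L]_n) (Q : 'M[L]_(n, m)) (R : 'M[L]_(m, n))
    (S : 'M[L]_m) :
  (forall i j, integral v (P i j)) -> (forall i j, integral v (Q i j)) ->
  (forall i j, integral v (R i j)) -> (forall i j, integral v (S i j)) ->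
  forall i j, integral v (block_mx P Q R S i j).
Proof.
move=> hP hQ hR hS i j.
by case: (split_ordP i) => i' ->; case: (split_ordP j) => j' ->;
  rewrite ?block_mxEul ?block_mxEur ?block_mxEdl ?block_mxEdr.
Qed.

Lemma in_K_mulmx1 N (P Q : 'M[L]_N) :
  (forall i j, integral v (P i j)) -> (forall i j, integral v (Q i j)) ->
  P *m Q = 1%:M -> in_K v P.
Proof.
move=> hP hQ PQ; split; [exact: (mulmx1_unit PQ).1 | exact: hP |].
by move=> i j; rewrite (invmx_mulmx1 PQ).
Qed.

Lemma in_K1 N : in_K v (1%:M : 'M_N).
Proof. by apply: (in_K_mulmx1 (Q := 1%:M)); rewrite ?mulmx1 //; apply: integral_1mx. Qed.

Lemma in_K_mul N (P Q : 'M[L]_N) : in_K v P -> in_K v Q -> in_K v (P *m Q).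
Proof.
move=> [uP iP iP'] [uQ iQ iQ'].
apply: (in_K_mulmx1 (Q := invmx Q *m invmx P)); try exact: integral_mulmx.
by rewrite mulmxA -(mulmxA P) mulmxV // mulmx1 mulmxV.
Qed.

Lemma in_K_tr N (P : 'M[L]_N) : in_K v P -> in_K v P^T.
Proof.
by case=> uP iP iP'; split=> [|i j|i j]; rewrite ?unitmx_tr // -?trmx_inv mxE.
Qed.

Lemma in_K_block_diag n m (P : 'M[L]_n) (Q : 'M[L]_m) :
  in_K v P -> in_K v Q -> in_K v (block_mx P 0 0 Q).
Proof.
move=> [uP iP iP'] [uQ iQ iQ'].
apply: (in_K_mulmx1 (Q := block_mx (invmx P) 0 0 (invmx Q))).
- exact: integral_block_mx iP integral_0mx integral_0mx iQ.
- exact: integral_block_mx iP' integral_0mx integral_0mx iQ'.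
by rewrite mulmx_block !mulmx0 !mul0mx !addr0 !add0r !mulmxV // -scalar_mx_block.
Qed.

Lemma in_K_unipotent n m (X : 'M[L]_(n, m)) :
  (forall i j, integral v (X i j)) -> in_K v (block_mx 1%:M X 0 1%:M).
Proof.
move=> iX; apply: (in_K_mulmx1 (Q := block_mx 1%:M (- X) 0 1%:M)).
- exact: integral_block_mx integral_1mx iX integral_0mx integral_1mx.
- apply: integral_block_mx integral_1mx _ integral_0mx integral_1mx => i j.
  by rewrite mxE; apply/vgeN/iX.
rewrite mulmx_block !mulmx0 !mul0mx !mul1mx !mulmx1 !addr0 !add0r addNr.
by rewrite -scalar_mx_block.
Qed.

Lemma in_K_perm_mx N (p : 'S_N) : in_K v (perm_mx p).
Proof.
have iP (q : 'S_N) i j : integral v (perm_mx q i j) by rewrite !mxE; apply: integral_bool.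
by apply: (in_K_mulmx1 (Q := perm_mx p^-1)); rewrite // -perm_mxM mulgV perm_mx1.
Qed.

Lemma in_KdK_mul N (E1 E2 G : 'M[L]_N) (d : 'rV[L]_N) :
  in_K v E1 -> in_K v E2 -> in_KdK v G d -> in_KdK v (E1 *m G *m E2) d.
Proof.
move=> K1 K2 [k1 [k2 [Kk1 Kk2 ->]]]; exists (E1 *m k1), (k2 *m E2).
by split; rewrite ?mulmxA //; apply: in_K_mul.
Qed.

Lemma in_KdK_tr N (G : 'M[L]_N) (d : 'rV[L]_N) : in_KdK v G d -> in_KdK v G^T d.
Proof.
move=> [k1 [k2 [Kk1 Kk2 ->]]]; exists k2^T, k1^T.
by split; rewrite ?trmx_mul ?tr_diag_mx ?mulmxA //; apply: in_K_tr.
Qed.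

Lemma in_KdK_block_diag n m (P : 'M[L]_n) (Q : 'M[L]_m) dP dQ :
  in_KdK v P dP -> in_KdK v Q dQ -> in_KdK v (block_mx P 0 0 Q) (row_mx dP dQ).
Proof.
move=> [p1 [p2 [Kp1 Kp2 ->]]] [q1 [q2 [Kq1 Kq2 ->]]].
exists (block_mx p1 0 0 q1), (block_mx p2 0 0 q2); split; try exact: in_K_block_diag.
by rewrite diag_mx_row !mulmx_block !mulmx0 !mul0mx !addr0 !add0r !mul0mx.
Qed.

Lemma in_KdK_col_perm N (G : 'M[L]_N) (d : 'rV[L]_N) (p : 'S_N) :
  in_KdK v G d -> in_KdK v G (col_perm p d).
Proof.
move=> [k1 [k2 [Kk1 Kk2 ->]]].
exists (k1 *m perm_mx p^-1), (perm_mx p *m k2).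
split; [exact: in_K_mul Kk1 (in_K_perm_mx _) | exact: in_K_mul (in_K_perm_mx _) Kk2 |].
have -> : diag_mx (col_perm p d) = perm_mx p *m diag_mx d *m perm_mx p^-1.
  by apply/matrixP => i j; rewrite -row_permE -col_permE !mxE (inj_eq perm_inj).
rewrite !mulmxA -(mulmxA k1 (perm_mx p^-1)) -perm_mxM mulVg perm_mx1 mulmx1.
by rewrite -(mulmxA _ (perm_mx p^-1)) -perm_mxM mulVg perm_mx1 mulmx1.
Qed.

Lemma vge_det_mulmx_diag k N (X : 'M[L]_(k, N)) (Y : 'M[L]_(N, k)) (d : 'I_N -> int)
    (b : int) :
  (forall i j, integral v (X i j)) -> (forall i j, integral v (Y i j)) ->
  (forall S : {set 'I_N}, #|S| = k -> b <= \sum_(x in S) d x) ->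
  vge v (\det (X *m diag_mx (\row_x t ^ d x) *m Y)) b.
Proof.
move=> iX iY hS; rewrite det_mulmx_ffun; apply: vge_sum => f _.
have [/injectiveP f_inj|] := boolP (injectiveb f); last first.
  case/injectivePn => i1 [i2 i12 f12].
  by rewrite (determinant_alternate i12) ?mulr0; [left | move=> j; rewrite !mxE f12].
have vXD : vge v (\prod_i (X *m diag_mx (\row_x t ^ d x)) i (f i)) (\sum_i d (f i)).
  apply: vge_prod => i _; rewrite mul_mx_diag !mxE -{2}[d (f i)]add0r.
  by apply: vgeM; [apply: iX | right; rewrite valuation_expz].
have vY : integral v (\det (\matrix_(i, j) Y (f i) j)).
  by apply: integral_det => i j; rewrite mxE.
apply: vge_le (vgeM vXD vY); rewrite addr0 -(big_imset _ (in2W f_inj)) /=.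
by apply: hS; rewrite card_imset // card_ord.
Qed.

Lemma vge_minor_KdK N (G : 'M[L]_N) (d : 'I_N -> int) k (rs cs : 'I_k -> 'I_N)
    (b : int) :
  in_KdK v G (\row_x t ^ d x) ->
  (forall S : {set 'I_N}, #|S| = k -> b <= \sum_(x in S) d x) ->
  vge v (\det (mxsub rs cs G)) b.
Proof.
move=> [k1 [k2 [[_ K1 _] [_ K2 _] ->]]]; rewrite mxsub_mul -mul_rowsub_mx.
by apply: vge_det_mulmx_diag => i j; rewrite mxE.
Qed.

Section MonomialValuation.
Variables (N : nat) (M : 'M[L]_N) (s : 'I_N -> 'I_N) (a : 'I_N -> int).
Hypotheses (s_inj : injective s) (M_supp : forall i k, (M i k != 0) = (k == s i)).
Hypothesis M_val : forall i k, M i k != 0 -> a i = v (M i k).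

Lemma vge_invmx_monomial k i : vge v (invmx M k i) (- a i).
Proof.
rewrite (invmx_monomial s_inj M_supp) mxE; case: eqP => [->|_]; last by left.
by right; rewrite valuationV ?M_supp // -M_val ?M_supp.
Qed.

End MonomialValuation.

Lemma in_K_monomial N (M : 'M[L]_N) (s : 'I_N -> 'I_N) :
  injective s -> (forall i k, (M i k != 0) = (k == s i)) ->
  (forall i k, M i k != 0 -> v (M i k) = 0) -> in_K v M.
Proof.
move=> s_inj M_supp M_val; split; first exact: monomial_unitmx M_supp.
  move=> i k; have [/M_val vM|/negbNE/eqP->] := boolP (M i k != 0); last by left.
  by right; rewrite vM.
move=> k i; rewrite /integral -oppr0.
apply: (vge_invmx_monomial (a := fun=> 0) s_inj M_supp).
by move=> i' k' /M_val ->.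
Qed.

Lemma monomial_in_KdK N (M : 'M[L]_N) (s : 'I_N -> 'I_N) (a : 'I_N -> int) :
  injective s -> (forall i k, (M i k != 0) = (k == s i)) ->
  (forall i k, M i k != 0 -> a i = v (M i k)) -> in_KdK v M (\row_i t ^ a i).
Proof.
move=> s_inj M_supp M_val.
pose U := diag_mx (\row_i (t ^ a i)^-1) *m M.
have U_E i k : U i k = (t ^ a i)^-1 * M i k by rewrite /U mul_diag_mx !mxE.
clearbody U.
have U_supp i k : (U i k != 0) = (k == s i).
  by rewrite U_E mulf_eq0 invr_eq0 (negPf (expz_neq0 _)) -M_supp.
exists 1%:M, U; split; first exact: in_K1.
  apply: (in_K_monomial s_inj U_supp) => i k; rewrite U_supp -M_supp => Mik0.
  by rewrite U_E valuationM ?invr_neq0 ?expz_neq0 // valuationV ?expz_neq0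
    // valuation_expz -M_val // addNr.
apply/matrixP => i k; rewrite mul1mx mul_diag_mx !mxE U_E.
by rewrite mulrA mulfV ?expz_neq0 ?mul1r.
Qed.

Section ColMonomial.
Variables (N : nat) (M : 'M[L]_N) (r : 'I_N -> 'I_N) (a : 'I_N -> int).
Hypotheses (r_inj : injective r) (M_supp : forall i k, (M i k != 0) = (i == r k)).
Hypothesis M_val : forall i k, M i k != 0 -> a k = v (M i k).

Let Mt_supp k i : (M^T k i != 0) = (i == r k).
Proof. by rewrite mxE. Qed.

Let Mt_val k i : M^T k i != 0 -> a k = v (M^T k i).
Proof. by rewrite mxE; apply: M_val. Qed.

Lemma vge_invmx_col_monomial k i : vge v (invmx M k i) (- a k).
Proof.
rewrite -[invmx M]trmxK trmx_inv mxE.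
exact: (vge_invmx_monomial r_inj Mt_supp Mt_val).
Qed.

Lemma col_monomial_in_KdK : in_KdK v M (\row_k t ^ a k).
Proof. by rewrite -[M]trmxK; apply/in_KdK_tr/(monomial_in_KdK r_inj Mt_supp Mt_val). Qed.

End ColMonomial.

End Valuation.

Lemma split_lshift m n (i : 'I_m) : split (lshift n i) = inl i.
Proof. exact: (unsplitK (inl _ i)). Qed.

Lemma split_rshift m n (i : 'I_n) : split (rshift m i) = inr i.
Proof. exact: (unsplitK (inr _ i)). Qed.

Section BlockTriangular.
Variables (L : fieldType) (v : L -> int) (t : L) (n m : nat).
Hypothesis hv : discrete_valuation v t.
Variables (A : 'M[L]_n) (B : 'M[L]_m) (C : 'M[L]_(n, m)).
Variables (alpha : 'I_n -> int) (beta : 'I_m -> int).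
Variables (sA : 'I_n -> 'I_n) (rB : 'I_m -> 'I_m).
Hypotheses (sA_inj : injective sA) (A_supp : forall i k, (A i k != 0) = (k == sA i)).
Hypotheses (rB_inj : injective rB) (B_supp : forall l j, (B l j != 0) = (l == rB j)).
Hypothesis A_val : forall i k, A i k != 0 -> alpha i = v (A i k).
Hypothesis B_val : forall l j, B l j != 0 -> beta j = v (B l j).

Local Notation gamma := (sorted_valuations alpha beta).

Lemma block_diag_in_KdK :
  in_KdK v (block_mx A 0 0 B) (\row_(k < n + m) t ^ nth 0 gamma k).
Proof.
have := size_sorted_valuations alpha beta; rewrite size_sort => /sort_nth_perm[p gamma_p].
have -> : \row_(k < n + m) t ^ nth 0 gamma k =
          col_perm p (row_mx (\row_i t ^ alpha i) (\row_j t ^ beta j)).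
  by rewrite -row_nth_cat_enum; apply/rowP => k; rewrite !mxE gamma_p.
apply: (in_KdK_col_perm hv); apply: in_KdK_block_diag.
  exact: (monomial_in_KdK hv sA_inj A_supp A_val).
exact: (col_monomial_in_KdK hv rB_inj B_supp B_val).
Qed.

Lemma block_in_KdK :
  (forall i j, vge v (C i j) (Num.min (alpha i) (beta j))) ->
  in_KdK v (block_mx A C 0 B) (\row_(k < n + m) t ^ nth 0 gamma k).
Proof.
move=> C_val.
pose C1 := \matrix_(i, j) if alpha i <= beta j then C i j else 0.
pose C2 := \matrix_(i, j) if alpha i <= beta j then 0 else C i j.
have -> : C = C1 + C2.
  by apply/matrixP => i j; rewrite !mxE; case: ifP; rewrite ?addr0 ?add0r.
have uA := monomial_unitmx sA_inj A_supp.
have uB : B \in unitmx.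
  by rewrite -unitmx_tr; apply: (monomial_unitmx rB_inj) => j l; rewrite mxE.
rewrite block_mx_unipotent //; apply: (in_KdK_mul hv _ _ block_diag_in_KdK).
- apply: (in_K_unipotent hv) => i j; rewrite mxE; apply: (vge_sum hv) => l _.
  rewrite -(addrN (beta l)); apply: (vgeM hv).
    rewrite mxE; case: leP => [_|/ltW ab]; first by left.
    by rewrite -(min_idPr ab).
  exact: (vge_invmx_col_monomial hv rB_inj B_supp B_val).
- apply: (in_K_unipotent hv) => k j; rewrite mxE; apply: (vge_sum hv) => i _.
  rewrite -(addNr (alpha i)); apply: (vgeM hv).
    exact: (vge_invmx_monomial hv sA_inj A_supp A_val).
  by rewrite mxE; case: leP => [ab|_]; [rewrite -(min_idPl ab) | left].
Qed.

Section Minor.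
Variables (i : 'I_n) (j : 'I_m).
Local Notation c := (v (C i j)).
Hypotheses (Cij0 : C i j != 0) (c_lt_alpha : c < alpha i) (c_lt_beta : c < beta j).

Local Notation PA := [set i' | alpha i' <= c].
Local Notation PB := [set j' | beta j' <= c].
Local Notation eA := (enum_val : 'I_#|PA| -> 'I_n).
Local Notation eB := (enum_val : 'I_#|PB| -> 'I_m).

(* Ordered so that the minor is upper triangular with diagonal
   A_(i', sA i') (i' in PA), C_ij, B_(rB j', j') (j' in PB); below the diagonal
   only zeros of the monomial A and B occur, since alpha_i > c and beta_j > c. *)
Definition minor_row (a : 'I_(#|PA| + (1 + #|PB|))) : 'I_(n + m) :=
  match split a with
  | inl a1 => lshift m (eA a1)
  | inr a2 => if split a2 is inr b then rshift n (rB (eB b)) else lshift m i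
  end.

Definition minor_col (a : 'I_(#|PA| + (1 + #|PB|))) : 'I_(n + m) :=
  match split a with
  | inl a1 => lshift m (sA (eA a1))
  | inr a2 => if split a2 is inr b then rshift n (eB b) else rshift n j
  end.

Local Notation minor := (mxsub minor_row minor_col (block_mx A C 0 B)).

Lemma minor_trig : is_trig_mx minor^T.
Proof.
apply/is_trig_mxP => a b; rewrite 2!mxE /minor_row /minor_col.
case: (split_ordP a) => [a1 ->|a2 ->]; case: (split_ordP b) => [b1 ->|b2 ->].
- rewrite block_mxEul /= => ab; apply/eqP; apply: contraTT ab; rewrite A_supp.
  by move=> /eqP/sA_inj/enum_val_inj ->; rewrite ltnn.
- case: (split_ordP b2) => [u ->|b3 ->].
  + rewrite block_mxEul => _; apply/eqP; apply: contraTT c_lt_alpha.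
    rewrite A_supp => /eqP/sA_inj e.
    by have := enum_valP a1; rewrite e inE -leNgt.
  + by rewrite block_mxEdl mxE.
- by move=> /= ab; move: (ltn_trans ab (ltn_ord b1)); rewrite ltnNge leq_addr.
case: (split_ordP a2) => [u ->|a3 ->]; case: (split_ordP b2) => [u' ->|b3 ->].
- by move=> /= ab; exfalso; move: ab (ltn_ord u) (ltn_ord u'); lia.
- rewrite block_mxEdr => _; apply/eqP; apply: contraTT c_lt_beta.
  rewrite B_supp => /eqP/rB_inj e.
  by have := enum_valP b3; rewrite e inE -leNgt.
- by move=> /= ab; exfalso; move: ab (ltn_ord u'); lia.
rewrite block_mxEdr /= => ab; apply/eqP; apply: contraTT ab; rewrite B_supp.
by move=> /eqP/rB_inj/enum_val_inj ->; lia.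
Qed.

Lemma det_minor :
  \det minor = (\prod_(i' in PA) A i' (sA i')) * (C i j * \prod_(j' in PB) B (rB j') j').
Proof.
rewrite -det_tr (det_trig minor_trig) big_split_ord big_split_ord big_ord1.
congr (_ * (_ * _)).
- rewrite [RHS]big_enum_val; apply: eq_bigr => a _.
  by rewrite 2!mxE /minor_row /minor_col split_lshift block_mxEul.
- by rewrite 2!mxE /minor_row /minor_col !split_rshift split_lshift block_mxEur.
- rewrite [RHS]big_enum_val; apply: eq_bigr => b _.
  by rewrite 2!mxE /minor_row /minor_col !split_rshift block_mxEdr.
Qed.

Lemma valuation_det_minor :
  \det minor != 0 /\
  v (\det minor) = \sum_(i' in PA) alpha i' + (c + \sum_(j' in PB) beta j').
Proof.
have A0 i' : A i' (sA i') != 0 by rewrite A_supp.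
have B0 j' : B (rB j') j' != 0 by rewrite B_supp.
have prodA0 : \prod_(i' in PA) A i' (sA i') != 0 by apply/prodf_neq0.
have prodB0 : \prod_(j' in PB) B (rB j') j' != 0 by apply/prodf_neq0.
have CB0 := mulf_neq0 Cij0 prodB0.
rewrite det_minor (mulf_neq0 prodA0 CB0) (valuationM hv prodA0 CB0).
rewrite (valuationM hv Cij0 prodB0) (valuation_prod hv (fun i' _ => A0 i')).
rewrite (valuation_prod hv (fun j' _ => B0 j')); split=> //.
congr (_ + (_ + _)); apply: eq_bigr => k _.
  by rewrite -A_val.
by rewrite -B_val.
Qed.

Lemma minor_not_in_KdK :
  ~ in_KdK v (block_mx A C 0 B) (\row_(k < n + m) t ^ nth 0 gamma k).
Proof.
move=> KdK; pose Q := [set x : 'I_(n + m) | nth 0 gamma x <= c].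
have cardQ : #|Q| = (#|PA| + #|PB|)%N.
  have := sum_sorted_valuations alpha beta c (fun=> 1); rewrite !sumr_const -natrD.
  by move/eqP; rewrite eqr_nat => /eqP.
have bound (S : {set 'I_(n + m)}) : #|S| = (#|PA| + (1 + #|PB|))%N ->
    \sum_(x in Q) nth 0 gamma x + c + 1 <= \sum_(x in S) nth 0 gamma x.
  by move=> cardS; rewrite lezD1 sum_sublevel_lt // cardS cardQ addnCA.
have [det0 vdet] := valuation_det_minor.
case: (vge_minor_KdK hv minor_row minor_col KdK bound) => [det_0|].
  by rewrite det_0 eqxx in det0.
rewrite vdet (sum_sorted_valuations alpha beta c (fun y => y)) /=; lia.
Qed.

End Minor.

Lemma block_KdK_vge :
  in_KdK v (block_mx A C 0 B) (\row_(k < n + m) t ^ nth 0 gamma k) ->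
  forall i j, vge v (C i j) (Num.min (alpha i) (beta j)).
Proof.
move=> KdK i j; have [->|Cij0] := eqVneq (C i j) 0; first by left.
have [|] := leP (Num.min (alpha i) (beta j)) (v (C i j)); first by right.
by rewrite lt_min => /andP[ca cb]; case: (minor_not_in_KdK Cij0 ca cb KdK).
Qed.

End BlockTriangular.

Unset Implicit Arguments. Set Strict Implicit.

Theorem corollary2p2 (L : fieldType) (v : L -> int) (t : L)
    (hv : discrete_valuation v t) (n m : nat)
    (A : 'M[L]_n) (B : 'M[L]_m) (C : 'M[L]_(n, m))
    (alpha : 'I_n -> int) (beta : 'I_m -> int) :
  A \in unitmx -> B \in unitmx ->
  row_monomial A -> col_monomial B ->
  (forall i j, A i j != 0 -> alpha i = v (A i j)) ->
  (forall i j, B i j != 0 -> beta j = v (B i j)) ->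
  let gamma := sort <=%O ([seq alpha i | i <- enum 'I_n] ++
                           [seq beta j | j <- enum 'I_m]) in
  in_KdK v (block_mx A C 0 B) (\row_(k < n + m) t ^ (nth 0 gamma k))
  <-> (forall i j, vge v (C i j) (Num.min (alpha i) (beta j))).
Proof.
move=> uA uB rmA cmB A_val B_val gamma.
have [sA sA_inj A_supp] := row_monomial_support uA rmA.
have [rB rB_inj B_supp] := col_monomial_support uB cmB.
split; first exact: (block_KdK_vge hv sA_inj A_supp rB_inj B_supp A_val B_val).
exact: (block_in_KdK hv sA_inj A_supp rB_inj B_supp A_val B_val).
Qed.
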